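(* Let $(S,\delta)$ be a dihedral set and $(E,\delta_E)$ an inscribed polygon with sets $E_{\mathrm{sides}}$, $E_{\mathrm{chords}}$ and a choice of matching sides $s_c\in S_c$ ($c\in E_{\mathrm{chords}}$), and let $\psi:H^\bullet(\mathcal M_{0,E})\cong H^\bullet(\mathcal M_{0,S'})\to H^\bullet(\mathcal M_{0,S})$ be the associated pullback. Let $X$ be a monomial in the classes $\omega_{c}$ for chords $c$ of $(E,\delta_E)$, and denote also by $X$ the same monomial in $H^\bullet(\mathcal M_{0,S})$ (chords of $(E,\delta_E)$ being chords of $(S,\delta)$). Then $\psi(X)-X$ is a linear combination of monomials $\omega_{c_1}\wedge\cdots\wedge\omega_{c_k}$ (chords of $(S,\delta)$) in each of which some $c_i$ crosses some chord of $E_{\mathrm{chords}}$.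
   Context: Dihedral set: finite $S$, $|S|=n\ge3$, identified with the sides of an unoriented $n$-gon up to dihedral symmetry; a chord is a pair of non-consecutive vertices; two chords cross if they meet in the interior. An inscribed polygon $(E,\delta_E)$ in $(S,\delta)$ is a polygon whose vertices are vertices of $(S,\delta)$ and whose sides are either sides or chords of $(S,\delta)$; $E_{\mathrm{sides}}\subset E$ and $E_{\mathrm{chords}}\subset E$ are its sides which are sides, resp. chords, of $(S,\delta)$. Then $S\setminus E_{\mathrm{sides}}=\bigsqcup_{c\in E_{\mathrm{chords}}}S_c$, where $S_c$ is the (nonempty, dihedrally consecutive) set of sides of $(S,\delta)$ cut off from $E$ by $c$. Choosing $s_c\in S_c$ for each $c$, let $S'=E_{\mathrm{sides}}\sqcup\{s_c\}$ with induced dihedral structure $\delta'$; the bijection $E\to S'$ (identity on $E_{\mathrm{sides}}$, $c\mapsto s_c$) is a dihedral isomorphism, inducing $\mathcal M_{0,E}\cong\mathcal M_{0,S'}$ and a correspondence of chords; $\psi$ is this identification followed by pullback along the forgetful map $\mathcal M_{0,S}\to\mathcal M_{0,S'}$. Here $\mathcal M_{0,S}$ is the moduli space of $S$-indexed distinct points on $\mathbb P^1(\mathbb C)$ modulo $\mathrm{PGL}_2(\mathbb C)$, and $\omega_c=\frac1{2\pi i}d\log u_c$ with $u_c$ Brown's dihedral coordinate (sides labelled $1..n$ in dihedral order, $c$ joining the vertex between sides $i,i+1$ to that between $j,j+1$: $u_c=\frac{(z_i-z_{j+1})(z_{i+1}-z_j)}{(z_i-z_j)(z_{i+1}-z_{j+1})}$).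 *)

From HB Require Import structures.
From mathcomp Require Import all_boot all_order all_algebra.
Set Implicit Arguments. Unset Strict Implicit. Unset Printing Implicit Defensive.
Import Order.TTheory GRing.Theory Num.Theory.

(* ---------- Combinatorics of the dihedral set S = 'I_n ----------
   Sides of (S,delta) are labelled 0..n-1 in dihedral order.
   Vertex i (i : 'I_n) is the vertex between side i and side i+1 (mod n);
   so side i+1 joins vertex i to vertex i+1.
   A chord is an (ordered representative of an unordered) pair of vertices. *)

Definition cdist n (a b : 'I_n) : nat := ((b + n - a) %% n)%N.

Definition in_open n (a b x : 'I_n) : bool := (0 < cdist a x < cdist a b)%N.

Definition is_chordS n (c : 'I_n * 'I_n) : bool :=
  [&& c.1 != c.2, c.2 != ordS c.1 & c.1 != ordS c.2].

Definition cross n (c d : 'I_n * 'I_n) : bool :=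
  uniq [:: c.1; c.2; d.1; d.2] && (in_open c.1 c.2 d.1 != in_open c.1 c.2 d.2).

(* ---------- Inscribed polygon E, given by its vertex set V ----------
   b follows a in the cyclic order of V: the side of E from a to b. *)
Definition consec n (V : {set 'I_n}) (a b : 'I_n) : bool :=
  [&& a \in V, b \in V, a != b & [forall x in V, ~~ in_open a b x]].

Definition prevV n (V : {set 'I_n}) (v : 'I_n) : 'I_n :=
  odflt v [pick u | consec V u v].

Definition E_chord n (V : {set 'I_n}) (c : 'I_n * 'I_n) : bool :=
  consec V c.1 c.2 && (c.2 != ordS c.1).

Definition is_chordE n (V : {set 'I_n}) (c : 'I_n * 'I_n) : bool :=
  [&& c.1 \in V, c.2 \in V, c.1 != c.2, ~~ consec V c.1 c.2 & ~~ consec V c.2 c.1].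

(* For the side of E starting at vertex a (from a
   to the next vertex b of E), sigma a is its image in S': the side a+1 = b of S
   if that side of E is a side of S (forced, since then cdist a b = 1), and the
   chosen s_c in S_c = {sides a+1, ..., b} if it is a chord c. *)
Definition matching_choice n (V : {set 'I_n}) (sigma : 'I_n -> 'I_n) : Prop :=
  forall a b, consec V a b -> (0 < cdist a (sigma a) <= cdist a b)%N.

(* ---------- Differential forms ----------
   Forms on M_{0,S} are pulled back (injectively) to the configuration space
   {z : 'I_n -> C injective} of S-indexed distinct points of the affine line,
   and evaluated pointwise on tangent vectors v : 'I_n -> C. *)
Section Forms.
Variables (C : fieldType) (n : nat).
Implicit Types (z v : 'I_n -> C).

Definition dlog_diff z v (a b : 'I_n) : C := (v a - v b) / (z a - z b).

(* d log of the cross-ratio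
   u = (z_i - z_j')(z_i' - z_j) / ((z_i - z_j)(z_i' - z_j')),
   evaluated at z on v (written out via d log(fg/hk) = dlog f + dlog g - ...) *)
Definition dlog_u z v (i i' j j' : 'I_n) : C :=
  dlog_diff z v i j' + dlog_diff z v i' j - dlog_diff z v i j - dlog_diff z v i' j'.

(* 2 pi i * omega_c for a chord c = (i,j) of S: u_c uses sides i, i+1, j, j+1 *)
Definition omegaS z v (c : 'I_n * 'I_n) : C :=
  dlog_u z v c.1 (ordS c.1) c.2 (ordS c.2).

(* 2 pi i * psi(omega_c) for a chord c of E: the vertex v of E corresponds to
   the vertex of S' between the sides sigma (prevV V v) and sigma v of S';
   pulling back Brown's coordinate along M_{0,S} -> M_{0,S'} gives the same
   cross-ratio in the points z_s, s in S'. *)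
Definition omegaPsi (V : {set 'I_n}) (sigma : 'I_n -> 'I_n) z v (c : 'I_n * 'I_n) : C :=
  dlog_u z v (sigma (prevV V c.1)) (sigma c.1) (sigma (prevV V c.2)) (sigma c.2).

Definition wedge k (om : ('I_n -> C) -> 'I_n * 'I_n -> C)
  (cs : k.-tuple ('I_n * 'I_n)) (vs : 'I_k -> 'I_n -> C) : C :=
  \det (\matrix_(i < k, j < k) om (vs j) (tnth cs i)).

End Forms.

(* For a chord (a, b) of E let p = sigma (prev a) and q = sigma (prev b), so that the vertex a of
   S' lies between its sides p and sigma a.  Brown's coordinate of (a, b), pulled back along the
   forgetful map, is the cross-ratio of z_p, z_(sigma a), z_q, z_(sigma b); telescoping
   d log (z_i - z_j) in both indices writes psi(omega_(a,b)) as the sum of the omega_(r,s) over the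
   vertices r of S between the sides p and sigma a, and s between q and sigma b.  This grid
   contains (a, b) itself, and every other chord (r, s) in it crosses one of the four sides of E
   at a or b; that side has r or s strictly inside, so it is a chord of S.  Expanding the wedge
   product by multilinearity of the determinant leaves X plus terms each containing such a chord. *)

From HB Require Import structures.
From mathcomp Require Import all_boot all_order all_algebra.
From mathcomp Require Import zify ring perm.
Import Order.TTheory GRing.Theory Num.Theory.
Set Implicit Arguments. Unset Strict Implicit. Unset Printing Implicit Defensive.

Section CyclicOrder.
Variable n : nat.
Implicit Types O x y z r s : 'I_n.
Implicit Types c e : 'I_n * 'I_n.

Lemma cdistE x y : cdist x y = if x <= y then y - x else y + n - x.
Proof.
rewrite /cdist; have := ltn_ord x; have := ltn_ord y => hy hx.
case: leqP => h; last by rewrite modn_small //; lia.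
have -> : y + n - x = (y - x) + n by lia.
by rewrite modnDr modn_small //; lia.
Qed.

Lemma cdist_lt x y : cdist x y < n.
Proof. by rewrite cdistE; have := ltn_ord x; have := ltn_ord y; case: ifP; lia. Qed.

Lemma cdist_self x : cdist x x = 0.
Proof. by rewrite cdistE leqnn subnn. Qed.

Lemma cdist_inj O : injective (cdist O).
Proof.
move=> x y; rewrite !cdistE => h; apply: ord_inj; move: h.
by have := ltn_ord x; have := ltn_ord y; have := ltn_ord O; do 2 case: ifP; lia.
Qed.

Lemma cdist_origin O x y : cdist x y =
  if cdist O x <= cdist O y then cdist O y - cdist O x else cdist O y + n - cdist O x.
Proof.
rewrite !cdistE.
by have := ltn_ord x; have := ltn_ord y; have := ltn_ord O; repeat case: ifP; lia.
Qed.

Lemma cdist_ordS O x :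
  cdist O (ordS x) = if (cdist O x).+1 == n then 0 else (cdist O x).+1.
Proof.
have ordSE : (ordS x : nat) = if x.+1 == n then 0 else x.+1.
  rewrite /=; case: eqP => [->|ne]; first by rewrite modnn.
  by rewrite modn_small //; have := ltn_ord x; lia.
rewrite !cdistE ordSE; have := ltn_ord x; have := ltn_ord O.
by repeat case: ifP; lia.
Qed.

Lemma cdist_ordSr x : 1 < n -> cdist x (ordS x) = 1.
Proof. by move=> n1; rewrite cdist_ordS cdist_self; case: eqP; lia. Qed.

Lemma cdist_eq O x y : (cdist O x == cdist O y) = (x == y).
Proof. by apply/eqP/eqP => [/cdist_inj|->]. Qed.

Definition shift x t := iter t (@ordS n) x.

Lemma cdist_shift O x t : cdist O x + t < n -> cdist O (shift x t) = cdist O x + t.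
Proof.
elim: t => [|t IH] h; first by rewrite addn0.
by rewrite /shift iterS -/(shift x t) cdist_ordS IH; [case: eqP; lia | lia].
Qed.

Lemma shift_cdist x y : shift x (cdist x y) = y.
Proof.
by apply: (@cdist_inj x); rewrite cdist_shift cdist_self ?add0n ?cdist_lt.
Qed.

Lemma in_open_origin O x y z : in_open x y z =
  if cdist O x <= cdist O y then cdist O x < cdist O z < cdist O y
  else (cdist O x < cdist O z) || (cdist O z < cdist O y).
Proof.
rewrite /in_open (cdist_origin O x z) (cdist_origin O x y).
by have := cdist_lt O x; have := cdist_lt O y; have := cdist_lt O z; repeat case: ifP; lia.
Qed.

Lemma in_open_neq x y z : in_open x y z -> (z != x) && (z != y).
Proof.
case/andP => h1 h2; apply/andP; split; apply/eqP => e; move: h1 h2; rewrite e ?cdist_self; lia.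
Qed.

Lemma in_open_ordSr x z : 1 < n -> in_open x (ordS x) z = false.
Proof. by move=> n1; rewrite /in_open cdist_ordSr //; lia. Qed.

Lemma in_open_ordSl x z : 1 < n -> z != x -> z != ordS x -> in_open (ordS x) x z.
Proof.
move=> n1 zx zSx; rewrite (in_open_origin x) cdist_ordSr // cdist_self /=.
have : cdist x z != cdist x x by apply: contra zx => /eqP /cdist_inj ->.
have : cdist x z != cdist x (ordS x) by apply: contra zSx => /eqP /cdist_inj ->.
by rewrite cdist_ordSr // cdist_self; lia.
Qed.

Lemma in_open_ordS x y z : 1 < n -> in_open x y z -> y != ordS x.
Proof. by move=> n1; apply: contraTneq => ->; rewrite in_open_ordSr. Qed.

Lemma cross_sep r s x y : in_open x y r -> in_open y x s -> cross (r, s) (x, y).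
Proof.
move=> rxy syx; have /andP [rx ry] := in_open_neq rxy.
have /andP [sy sx] := in_open_neq syx.
have xy : x != y by apply: contraTneq rxy => ->; rewrite /in_open cdist_self; lia.
move: rxy syx; rewrite !(in_open_origin x) cdist_self leq0n => hr hs.
have {}hs : cdist x y < cdist x s by move: hs; case: ifP; lia.
have rs : r != s by apply/eqP => e; move: hr hs; rewrite e; lia.
rewrite /cross /= !inE !negb_or rx ry rs sx sy xy /=.
have -> : in_open r s x = false by rewrite (in_open_origin x) cdist_self; case: ifP; lia.
have -> : in_open r s y by rewrite (in_open_origin x); case: ifP; lia.
by [].
Qed.

Lemma in_open_swap x y z : x != y -> z != x -> z != y -> in_open y x z = ~~ in_open x y z.
Proof.
rewrite -!(cdist_eq x) !(in_open_origin x) cdist_self leq0n /=.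
by case: ifP => h yx zx zy; [lia | apply/idP/idP; lia].
Qed.

Lemma cross_sym r s e : cross (r, s) e = cross (s, r) e.
Proof.
case: e => x y; rewrite /cross.
have -> : uniq [:: s; r; x; y] = uniq [:: r; s; x; y].
  by apply: perm_uniq; rewrite (perm_catCA [:: s] [:: r]).
case: (boolP (uniq _)) => //=.
rewrite !inE !negb_or => /and4P [/and3P [rs rx ry] /andP [sx sy] _ _].
rewrite !(@in_open_swap r s) // ?(eq_sym x) ?(eq_sym y) //.
by case: (in_open r s x); case: (in_open r s y).
Qed.

Lemma cross_chordS c e : 1 < n -> cross c e -> is_chordS c.
Proof.
case: c e => r s [x y] n1 /andP [/= u h].
move: u; rewrite !inE !negb_or => /and4P [/and3P [rs rx ry] /andP [sx sy] _ _].
rewrite /is_chordS /= rs /=; apply/andP; split.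
  by apply: contraTneq h => ->; rewrite !in_open_ordSr.
by apply: contraTneq h => rSs; rewrite rSs !in_open_ordSl // -?rSs eq_sym.
Qed.

Lemma arc_origin O x y s :
  0 < cdist x s <= cdist x y -> cdist O x < cdist O y -> cdist O x < cdist O s <= cdist O y.
Proof.
rewrite (cdist_origin O x s) (cdist_origin O x y).
by have := cdist_lt O s; have := cdist_lt O y; do 2 case: ifP; lia.
Qed.

Lemma arc_span O w x y s : 0 < cdist x s <= cdist x y ->
  cdist O w <= cdist O x < cdist O y -> cdist O x < cdist O w + cdist w s <= cdist O y.
Proof.
move=> hs /andP [wx xy]; have := arc_origin hs xy.
by rewrite (cdist_origin O w s); case: ifP; lia.
Qed.

Lemma arc_span_origin O w x s : 0 < cdist x s <= cdist x O ->
  0 < cdist O w <= cdist O x -> cdist O x < cdist O w + cdist w s <= n.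
Proof.
rewrite (cdist_origin O x s) (cdist_origin O x O) (cdist_origin O w s) cdist_self.
by have := cdist_lt O x; have := cdist_lt O s; repeat case: ifP; lia.
Qed.

Lemma cdist_lt_span O p a d : cdist O p <= cdist O a < cdist O p + d -> cdist p a < d.
Proof. by rewrite (cdist_origin O p a); case: ifP; lia. Qed.

Lemma quad_cross O b0 b b1 a0 a r s :
  cdist O b0 < cdist O b < cdist O b1 -> cdist O b1 <= cdist O a0 < cdist O a ->
  cdist O a0 < cdist O r -> cdist O b0 < cdist O s < cdist O b1 -> (r != a) || (s != b) ->
  exists2 e, e \in [:: (a0, a); (a, O); (b0, b); (b, b1)] &
    (in_open e.1 e.2 r || in_open e.1 e.2 s) && cross (r, s) e.
Proof.
move=> hb ha hr hs hrs.
have open_r x y : in_open x y r = _ := in_open_origin O x y r.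
have open_s x y : in_open x y s = _ := in_open_origin O x y s.
case: (ltngtP (cdist O r) (cdist O a)) => [ra|ar|ra].
- have ra0 : in_open a0 a r by rewrite open_r; case: ifP; lia.
  exists (a0, a); rewrite ?inE ?eqxx // ra0 cross_sep //.
  by rewrite open_s; case: ifP; lia.
- have ra0 : in_open a O r by rewrite open_r cdist_self; case: ifP; lia.
  exists (a, O); rewrite ?inE ?eqxx ?orbT // ra0 cross_sep //.
  by rewrite open_s cdist_self; case: ifP; lia.
have sb_ne : s != b by move: hrs; rewrite (cdist_inj ra) eqxx.
case: (ltngtP (cdist O s) (cdist O b)) => [sb|bs|sb].
- have sb0 : in_open b0 b s by rewrite open_s; case: ifP; lia.
  exists (b0, b); rewrite ?inE ?eqxx ?orbT // sb0 orbT cross_sym cross_sep //.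
  by rewrite open_r; case: ifP; lia.
- have sb1 : in_open b b1 s by rewrite open_s; case: ifP; lia.
  exists (b, b1); rewrite ?inE ?eqxx ?orbT // sb1 orbT cross_sym cross_sep //.
  by rewrite open_r; case: ifP; lia.
by move: sb_ne; rewrite -(cdist_eq O) sb eqxx.
Qed.

Lemma shift_span_cross O b0 b b1 a0 a p q d1 d2 t t' :
  cdist O a0 < cdist O p <= cdist O a -> cdist O a < cdist O p + d1 <= n ->
  cdist O b0 < cdist O q <= cdist O b -> cdist O b < cdist O q + d2 <= cdist O b1 ->
  cdist O b1 <= cdist O a0 -> t < d1 -> t' < d2 ->
  (t != cdist p a) || (t' != cdist q b) ->
  exists2 e, e \in [:: (a0, a); (a, O); (b0, b); (b, b1)] &
    (in_open e.1 e.2 (shift p t) || in_open e.1 e.2 (shift q t')) &&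
    cross (shift p t, shift q t') e.
Proof.
move=> hp hpa hq hqb hba ht ht' htt.
have hr : cdist O (shift p t) = cdist O p + t by apply: cdist_shift; lia.
have hs : cdist O (shift q t') = cdist O q + t' by apply: cdist_shift; lia.
apply: quad_cross; rewrite ?hr ?hs; try lia.
rewrite -!(cdist_eq O) hr hs; move: htt.
by rewrite (cdist_origin O p a) (cdist_origin O q b); do 2 case: ifP; lia.
Qed.

End CyclicOrder.

Section Polygon.
Variables (n : nat) (V : {set 'I_n}).
Implicit Types O x y z : 'I_n.

Lemma consec_in x y z : consec V x y -> z \in V -> ~~ in_open x y z.
Proof. by case/and4P => _ _ _ /forallP h zV; have := h z; rewrite zV. Qed.

Lemma consec_neq x y : consec V x y -> x != y.
Proof. by case/and4P. Qed.

Lemma consec_meml x y : consec V x y -> x \in V.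
Proof. by case/and4P. Qed.

Lemma consec_memr x y : consec V x y -> y \in V.
Proof. by case/and4P. Qed.

Lemma consec_E_chord x y z : 1 < n -> consec V x y -> in_open x y z -> E_chord V (x, y).
Proof. by move=> n1 cxy /(in_open_ordS n1); rewrite /E_chord cxy. Qed.

Lemma consec_injl x x' y : consec V x y -> consec V x' y -> x = x'.
Proof.
move=> cx cx'; apply/eqP.
move: (consec_in cx (consec_meml cx')) (consec_in cx' (consec_meml cx)).
move: (consec_neq cx) (consec_neq cx').
by rewrite -!(cdist_eq y) !(in_open_origin y) cdist_self; do 2 case: ifP; lia.
Qed.

Lemma consec_lt_origin O x z : consec V x O -> z \in V -> z != x -> cdist O z < cdist O x.
Proof.
move=> cxO zV; move: (consec_in cxO zV) (consec_neq cxO).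
by rewrite -!(cdist_eq O) (in_open_origin O) cdist_self; case: ifP; lia.
Qed.

Lemma consec_lt O x y : consec V x y -> O \in V -> y != O -> cdist O x < cdist O y.
Proof.
move=> cxy OV; move: (consec_in cxy OV) (consec_neq cxy).
by rewrite -!(cdist_eq O) (in_open_origin O) cdist_self; case: ifP; lia.
Qed.

Lemma consec_below O x y z : consec V x y -> z \in V -> z != x ->
  cdist O x < cdist O y -> cdist O z < cdist O y -> cdist O z < cdist O x.
Proof.
move=> /consec_in cxy /cxy.
by rewrite -(cdist_eq O) (in_open_origin O); case: ifP; lia.
Qed.

Lemma consec_above O x y z : consec V x y -> z \in V ->
  cdist O x < cdist O y -> cdist O x < cdist O z -> cdist O y <= cdist O z.
Proof.
move=> /consec_in cxy /cxy.
by rewrite (in_open_origin O); case: ifP; lia.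
Qed.

Lemma consec_exists_next x y : x \in V -> y \in V -> x != y -> exists z, consec V x z.
Proof.
move=> xV yV xy; have yVx : y \in V :\ x by rewrite !inE eq_sym xy.
case: (@arg_minnP _ y (mem (V :\ x)) (cdist x) yVx) => z.
rewrite !inE => /andP [zx zV] zmin.
exists z; rewrite /consec xV zV eq_sym zx /=.
apply/forallP => w; apply/implyP => wV; apply/negP => /andP [w1 w2].
have wx : w != x by apply: contraTneq w1 => ->; rewrite cdist_self.
by have := zmin w; rewrite !inE wx wV => /(_ isT); lia.
Qed.

Lemma consec_exists_prev x y : x \in V -> y \in V -> x != y -> exists z, consec V z x.
Proof.
move=> xV yV xy; have yVx : y \in V :\ x by rewrite !inE eq_sym xy.
case: (@arg_minnP _ y (mem (V :\ x)) (fun z => cdist z x) yVx) => z.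
rewrite !inE => /andP [zx zV] zmin.
exists z; rewrite /consec zV xV zx /=.
apply/forallP => w; apply/implyP => wV; apply/negP => /andP [w1 w2].
have wx : w != x by apply: contraTneq w2 => ->; rewrite ltnn.
have := zmin w; rewrite !inE wx wV (cdist_origin z w x) => /(_ isT).
by move: w1 w2; have := cdist_lt z x; case: ifP; lia.
Qed.

Lemma prevV_consec x y : x \in V -> y \in V -> x != y -> consec V (prevV V x) x.
Proof.
move=> xV yV xy; rewrite /prevV; case: pickP => [z //|none].
by have [z cz] := consec_exists_prev xV yV xy; have := none z; rewrite cz.
Qed.

Lemma chordE_chordS c : 1 < n -> is_chordE V c -> is_chordS c.
Proof.
case: c => a b n1 /and5P [/= aV bV ab nab nba]; rewrite /is_chordS /= ab /=.
apply/andP; split.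
  apply: contra nab => /eqP bS; rewrite /consec aV bV ab /=.
  by apply/forallP => w; rewrite bS in_open_ordSr // implybT.
apply: contra nba => /eqP aS; rewrite /consec aV bV eq_sym ab /=.
by apply/forallP => w; rewrite aS in_open_ordSr // implybT.
Qed.

End Polygon.

Section ChordSpan.
Variables (n : nat) (V : {set 'I_n}) (sigma : 'I_n -> 'I_n).
Hypotheses (n1 : 1 < n) (hm : matching_choice V sigma).

Section Layout.
Variables a b al ap be bp : 'I_n.
Hypotheses (ch_ab : is_chordE V (a, b)) (cal : consec V al a) (cap : consec V a ap).
Hypotheses (cbe : consec V be b) (cbp : consec V b bp).
Local Notation o := (cdist ap).

Lemma chord_layout :
  [/\ o al < o (sigma al) <= o a,
      o a < o (sigma al) + cdist (sigma al) (sigma a) <= n,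
      o be < o (sigma be) <= o b,
      o b < o (sigma be) + cdist (sigma be) (sigma b) <= o bp &
      o bp <= o al].
Proof.
have [/= aV bV ab nab nba] := and5P ch_ab.
have alV := consec_meml cal; have apV := consec_memr cap.
have bap : b != ap by apply: contraNneq nab => ->.
have bpap : bp != ap.
  by apply: contraNneq ab => bpap; apply/eqP; apply: (consec_injl cap); rewrite -bpap.
have al_a := consec_lt_origin cap alV (consec_neq cal).
have b_a : o b < o a by apply: consec_lt_origin cap bV _; rewrite eq_sym.
have b_al : o b < o al by apply: consec_below cal bV _ al_a b_a; apply: contraNneq nba => ->.
have b_bp := consec_lt cbp apV bpap.
have sal := arc_origin (hm cal) al_a.
have sbe := arc_origin (hm cbe) (consec_lt cbe apV bap).
split => //; last exact: consec_above cbp alV b_bp b_al.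
  by apply: arc_span_origin (hm cap) _; case/andP: sal => h ->; rewrite (leq_ltn_trans _ h).
by apply: arc_span (hm cbp) _; case/andP: sbe => _ ->.
Qed.

Lemma chord_span_home :
  cdist (sigma al) a < cdist (sigma al) (sigma a) /\
  cdist (sigma be) b < cdist (sigma be) (sigma b).
Proof.
have [/andP [_ pa] /andP [a_end _] /andP [_ qb] /andP [b_end _] _] := chord_layout.
by split; apply: (cdist_lt_span (O := ap)); rewrite ?pa ?qb.
Qed.

Lemma chord_span_cross t t' :
  t < cdist (sigma al) (sigma a) -> t' < cdist (sigma be) (sigma b) ->
  (t != cdist (sigma al) a) || (t' != cdist (sigma be) b) ->
  exists e, E_chord V e && cross (shift (sigma al) t, shift (sigma be) t') e.
Proof.
have [la1 la2 la3 la4 la5] := chord_layout => ht ht' htt.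
have [[x y] e_side /andP [e_open e_cross]] := shift_span_cross la1 la2 la3 la4 la5 ht ht' htt.
have cxy : consec V x y by move: e_side; rewrite !inE => /or4P [] /eqP [-> ->].
by exists (x, y); rewrite e_cross andbT; case/orP: e_open; apply: consec_E_chord.
Qed.

End Layout.

Definition span_start x := sigma (prevV V x).
Definition span_len x := cdist (span_start x) (sigma x).

Definition in_span (c j : 'I_n * 'I_n) := (j.1 < span_len c.1) && (j.2 < span_len c.2).
Definition span_chord (c j : 'I_n * 'I_n) :=
  (shift (span_start c.1) j.1, shift (span_start c.2) j.2).
Definition span_home (c : 'I_n * 'I_n) : 'I_n * 'I_n :=
  (Ordinal (cdist_lt (span_start c.1) c.1), Ordinal (cdist_lt (span_start c.2) c.2)).

Lemma span_chord_home c : span_chord c (span_home c) = c.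
Proof. by case: c => x y; rewrite /span_chord /= !shift_cdist. Qed.

Lemma chordE_neighbours c : is_chordE V c -> exists ap bp,
  [/\ consec V (prevV V c.1) c.1, consec V c.1 ap, consec V (prevV V c.2) c.2 & consec V c.2 bp].
Proof.
case/and5P => aV bV ab _ _; have ba : c.2 != c.1 by rewrite eq_sym.
have [ap cap] := consec_exists_next aV bV ab; have [bp cbp] := consec_exists_next bV aV ba.
by exists ap, bp; split; rewrite // (prevV_consec aV bV ab, prevV_consec bV aV ba).
Qed.

Lemma in_span_home c : is_chordE V c -> in_span c (span_home c).
Proof.
case: c => x y ch; have [ap [bp [cal cap cbe cbp]]] := chordE_neighbours ch.
by have [hx hy] := chord_span_home ch cal cap cbe cbp; rewrite /in_span hx hy.
Qed.

Lemma span_chord_cross c j : is_chordE V c -> in_span c j -> j != span_home c ->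
  exists e, E_chord V e && cross (span_chord c j) e.
Proof.
case: c j => x y [t t'] ch /andP [ht ht'] ne.
have [ap [bp [cal cap cbe cbp]]] := chordE_neighbours ch.
apply: (chord_span_cross ch cal cap cbe cbp ht ht').
by move: ne; rewrite xpair_eqE negb_and -!val_eqE.
Qed.

Definition span_tuple k (X : k.-tuple ('I_n * 'I_n)) (g : {ffun 'I_k -> 'I_n * 'I_n}) :=
  [tuple span_chord (tnth X i) (g i) | i < k].

Lemma span_tuple_home k (X : k.-tuple ('I_n * 'I_n)) :
  span_tuple X [ffun i => span_home (tnth X i)] = X.
Proof. by apply: eq_from_tnth => i; rewrite tnth_mktuple ffunE span_chord_home. Qed.

Lemma span_tuple_cross k (X : k.-tuple ('I_n * 'I_n)) (g : {ffun 'I_k -> 'I_n * 'I_n}) :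
  all (is_chordE V) X -> g \in family (fun i => in_span (tnth X i)) ->
  g != [ffun i => span_home (tnth X i)] ->
  all (@is_chordS n) (span_tuple X g) &&
  [exists i, exists e, E_chord V e && cross (tnth (span_tuple X g) i) e].
Proof.
move=> /all_tnthP hX /familyP gF gg0.
have cross_of i : g i != span_home (tnth X i) ->
    exists e, E_chord V e && cross (span_chord (tnth X i) (g i)) e.
  exact: span_chord_cross (hX i) (gF i).
apply/andP; split.
  apply/all_tnthP => i; rewrite tnth_mktuple.
  have [->|ne] := eqVneq (g i) (span_home (tnth X i)).
    by rewrite span_chord_home (chordE_chordS n1 (hX i)).
  by have [e /andP [_ /(cross_chordS n1)]] := cross_of i ne.
have [i ne] : exists i, g i != span_home (tnth X i).
  case: (pickP (fun i => g i != span_home (tnth X i))) => [i ne|all_home]; first by exists i.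
  by case/eqP: gg0; apply/ffunP => i; rewrite ffunE; apply/eqP/negbFE/all_home.
have [e he] := cross_of i ne.
by apply/existsP; exists i; apply/existsP; exists e; rewrite tnth_mktuple.
Qed.

End ChordSpan.

Local Open Scope ring_scope.

Lemma subrACA (V : zmodType) (x y z t : V) : (x - y) - (z - t) = (x - z) - (y - t).
Proof. by rewrite !opprB addrACA [RHS]addrACA (addrC (- y)). Qed.

Lemma sumr_telescope2 (V : zmodType) (H : nat -> nat -> V) d1 d2 :
  \sum_(t < d1) \sum_(t' < d2) ((H t t'.+1 - H t.+1 t'.+1) - (H t t' - H t.+1 t')) =
  (H 0%N d2 - H 0%N 0%N) - (H d1 d2 - H d1 0%N).
Proof.
under eq_bigr => t _.
  rewrite -(big_mkord xpredT (fun t' => (H t t'.+1 - H t.+1 t'.+1) - (H t t' - H t.+1 t'))).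
  rewrite telescope_sumr // subrACA -opprB.
  over.
rewrite sumrN -(big_mkord xpredT (fun t => (H t.+1 d2 - H t.+1 0%N) - (H t d2 - H t 0%N))).
by rewrite telescope_sumr // opprB.
Qed.

Lemma sum_ord_pair_widen (V : nmodType) m d1 d2 (F : nat -> nat -> V) :
  (d1 <= m)%N -> (d2 <= m)%N ->
  \sum_(t < d1) \sum_(t' < d2) F t t' =
  \sum_(j : 'I_m * 'I_m | (j.1 < d1)%N && (j.2 < d2)%N) F j.1 j.2.
Proof.
move=> h1 h2; rewrite (big_ord_widen m (fun t => \sum_(t' < d2) F t t') h1).
under eq_bigr => t _ do rewrite (big_ord_widen m (fun t' => F t t') h2).
by rewrite pair_big_dep.
Qed.

Lemma det_sum_family (R : comPzRingType) k (J : finType) (P : 'I_k -> pred J)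
  (F : 'I_k -> J -> 'I_k -> R) :
  \det (\matrix_(i, j) \sum_(x | P i x) F i x j) =
  \sum_(g in family P) \det (\matrix_(i, j) F i (g i) j).
Proof.
rewrite /determinant.
transitivity (\sum_(s : 'S_k) \sum_(g in family P) (-1) ^+ s * \prod_i F i (g i) (s i)).
  apply: eq_bigr => s _; rewrite -mulr_sumr; congr (_ * _).
  under eq_bigr => i _ do rewrite mxE.
  exact: bigA_distr_big_dep.
rewrite exchange_big; apply: eq_bigr => g _; apply: eq_bigr => s _.
by congr (_ * _); apply: eq_bigr => i _; rewrite mxE.
Qed.

Section Pullback.
Variables (C : fieldType) (n : nat) (V : {set 'I_n}) (sigma : 'I_n -> 'I_n).

Lemma omegaPsi_span z v c :
  omegaPsi V sigma z v c =
  \sum_(j | in_span V sigma c j) omegaS (C := C) z v (span_chord V sigma c j).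
Proof.
set p := span_start V sigma c.1; set q := span_start V sigma c.2.
pose H t t' := dlog_diff z v (shift p t) (shift q t').
rewrite -(@sum_ord_pair_widen _ n _ _ (fun t t' => omegaS z v (shift p t, shift q t')));
  try exact: ltnW (cdist_lt _ _).
transitivity ((H 0%N (span_len V sigma c.2) - H 0%N 0%N) -
  (H (span_len V sigma c.1) (span_len V sigma c.2) - H (span_len V sigma c.1) 0%N)).
  by rewrite /H !shift_cdist /omegaPsi /dlog_u; ring.
by rewrite -sumr_telescope2; apply: eq_bigr => t _; apply: eq_bigr => t' _;
  rewrite /omegaS /dlog_u /H /=; ring.
Qed.

Lemma wedge_omegaPsi k (X : k.-tuple ('I_n * 'I_n)) z vs :
  wedge (omegaPsi V sigma z) X vs =
  \sum_(g in family (fun i => in_span V sigma (tnth X i)))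
    wedge (omegaS (C := C) z) (span_tuple V sigma X g) vs.
Proof.
pose F i x j := omegaS z (vs j) (span_chord V sigma (tnth X i) x).
transitivity (\sum_(g in family (fun i => in_span V sigma (tnth X i)))
    \det (\matrix_(i, j) F i (g i) j)); last first.
  by apply: eq_bigr => g _; congr (\det _); apply/matrixP => i j; rewrite !mxE tnth_mktuple.
rewrite -det_sum_family; congr (\det _); apply/matrixP => i j.
by rewrite !mxE omegaPsi_span.
Qed.

End Pullback.

Theorem lemma4 (C : numClosedFieldType) (n : nat) (V : {set 'I_n})
  (sigma : 'I_n -> 'I_n) (k : nat) (X : k.-tuple ('I_n * 'I_n)) :
  (3 <= n)%N -> (3 <= #|V|)%N -> matching_choice V sigma ->
  all (is_chordE V) X ->
  exists L : seq (C * k.-tuple ('I_n * 'I_n)),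
    all (fun p : C * k.-tuple ('I_n * 'I_n) => all (@is_chordS n) p.2 &&
           [exists i : 'I_k, exists e : 'I_n * 'I_n,
              E_chord V e && cross (tnth p.2 i) e]) L /\
    forall z : 'I_n -> C, injective z ->
    forall vs : 'I_k -> 'I_n -> C,
      wedge (omegaPsi V sigma z) X vs - wedge (omegaS z) X vs
      = \sum_(p <- L) p.1 * wedge (omegaS z) p.2 vs.
Proof.
move=> n3 _ hm hX; have n1 : (1 < n)%N by apply: leq_trans n3.
have chX i : is_chordE V (tnth X i) by apply/all_tnthP.
pose F i := in_span V sigma (tnth X i).
pose g0 : {ffun 'I_k -> 'I_n * 'I_n} := [ffun i => span_home V sigma (tnth X i)].
have g0F : g0 \in family F.
  by apply/familyP => i; rewrite ffunE; move: (in_span_home hm (chX i)).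
exists [seq (1, span_tuple V sigma X g) | g <- enum [pred g in family F | g != g0]]; split.
  rewrite all_map; apply/allP => g; rewrite mem_enum inE => /andP [gF gg0].
  by have := span_tuple_cross n1 hm hX gF gg0.
move=> z _ vs; rewrite wedge_omegaPsi (bigD1 g0 g0F) /= span_tuple_home addrC addrK.
rewrite big_map big_enum /=; apply: eq_big => [g | g _]; first by rewrite !inE.
by rewrite mul1r.
Qed.
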